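(* In a public goods economy (as in the context), let $\mathbf{a}$ be an outcome with $\mathbf{0}<\mathbf{a}<\mathbf{1}$. Then $\mathbf{a}$ is Pareto efficient if and only if there exist directions $\mathbf{v}_{up}>\mathbf{0}$ and $\mathbf{v}_{down}<\mathbf{0}$ such that $\mathbf{d}_{\mathbf{v}_{up}}\mathbf{u}(\mathbf{a})\le\mathbf{0}$ and $\mathbf{d}_{\mathbf{v}_{down}}\mathbf{u}(\mathbf{a})\le\mathbf{0}$.
   Context: Agents $N=\{1,\dots,n\}$; outcomes are vectors in $[0,1]^n$. Vector orderings: $\mathbf{x}\ge\mathbf{y}$ (resp. $\le$) means $x_i\ge y_i$ (resp. $\le$) for all $i$; $\mathbf{x}>\mathbf{y}$ (resp. $<$) means strict inequality in every coordinate; $\mathbf{x}\gneq\mathbf{y}$ means $\mathbf{x}\ge\mathbf{y}$ and $x_j>y_j$ for some $j$. The utility function $\mathbf{u}:[0,1]^n\to[0,1]^n$ is continuous, concave, and has positive externalities: whenever $\mathbf{a}\gneq\mathbf{a}'$ and $a_i=a'_i$, then $u_i(\mathbf{a})>u_i(\mathbf{a}')$. $\mathbf{a}$ is Pareto efficient if there is no outcome $\mathbf{a}'$ with $\mathbf{u}(\mathbf{a}')\gneq\mathbf{u}(\mathbf{a})$. For $\mathbf{v}\in\mathbb{R}^n$, $\mathbf{d}_{\mathbf{v}}\mathbf{u}(\mathbf{a}):=\lim_{\lambda\to0^+}\frac{\mathbf{u}(\mathbf{a}+\lambda\mathbf{v})-\mathbf{u}(\mathbf{a})}{\lambda}$ is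 the one-sided directional derivative. *)

From mathcomp Require Import all_boot all_order all_algebra.
From mathcomp Require Import all_classical all_reals all_analysis.
Set Implicit Arguments. Unset Strict Implicit. Unset Printing Implicit Defensive.
Import Order.TTheory GRing.Theory Num.Theory.
Local Open Scope ring_scope.
Local Open Scope classical_set_scope.

Section Defs.
Variables (R : realType) (n : nat).
Local Notation vec := ('I_n -> R).

Definition vle (x y : vec) := forall i, x i <= y i.
Definition vlt (x y : vec) := forall i, x i < y i.
Definition vlne (x y : vec) := vle x y /\ exists j, x j < y j.

Definition vcst (c : R) : vec := fun _ => c.
Definition vadd (x y : vec) : vec := fun i => x i + y i.
Definition vscale (l : R) (x : vec) : vec := fun i => l * x i.

Definition outcome (a : vec) := forall i, 0 <= a i <= 1.

(* u : [0,1]^n -> [0,1]^n, given as a total function, hypotheses on the cube *)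
Definition maps_cube (u : vec -> vec) :=
  forall a, outcome a -> outcome (u a).

(* continuity on the cube (epsilon-delta, sup-distance = Euclidean topology) *)
Definition cont_on_cube (u : vec -> vec) :=
  forall a, outcome a -> forall eps : R, 0 < eps -> exists2 delta : R, 0 < delta &
    forall b, outcome b -> (forall j, `|b j - a j| < delta) ->
      forall i, `|u b i - u a i| < eps.

Definition concave_on_cube (u : vec -> vec) :=
  forall a b (t : R), outcome a -> outcome b -> 0 <= t <= 1 ->
    vle (vadd (vscale t (u a)) (vscale (1 - t) (u b)))
        (u (vadd (vscale t a) (vscale (1 - t) b))).

Definition positive_externalities (u : vec -> vec) :=
  forall a a' i, outcome a -> outcome a' -> vlne a' a -> a i = a' i ->
    u a' i < u a i.

Definition public_goods_utility (u : vec -> vec) :=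
  [/\ maps_cube u, cont_on_cube u, concave_on_cube u &
      positive_externalities u].

Definition pareto_efficient (u : vec -> vec) (a : vec) :=
  ~ exists a', outcome a' /\ vlne (u a) (u a').

Definition dir_deriv (u : vec -> vec) (a v d : vec) :=
  forall i, (fun l : R => (u (vadd a (vscale l v)) i - u a i) / l)
              @ (0 : R)^'+ --> (d i : R^o).
End Defs.
Notation vec R n := ('I_n -> R%type).

From mathcomp Require Import all_boot all_order all_algebra.
From mathcomp Require Import all_classical all_reals all_analysis.
From mathcomp Require Import ring lra.
Set Implicit Arguments. Unset Strict Implicit. Unset Printing Implicit Defensive.
Import Order.TTheory GRing.Theory Num.Theory.
Import numFieldNormedType.Exports.
Local Open Scope ring_scope.
Local Open Scope classical_set_scope.

(* Concavity makes the one-sided directional derivative [f v := d_v u(a)] exist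
   at the interior point [a] for every [v]; [f] is positively homogeneous and
   superadditive, and positive externalities give [f (e_j) i > 0] for [i <> j].
   Pareto efficiency of [a] amounts to the absence of a direction [w] with
   [f w > 0]: such a [w] can be followed for a short time, and conversely a
   Pareto improvement [a'] gives [f (a' - a) >= u a' - u a], which is [>= 0]
   and nonzero, and a small push along some [e_j] makes it positive.
   For maps like [f], there is no [w] with [f w > 0] iff [f v <= 0] for some
   [v > 0] and [f p <= 0] for some [p < 0]. One direction: any [w] lies below
   the least nonnegative multiple of [v] or of [p] that dominates it, with
   equality in some coordinate [k], and superadditivity gives [f w k <= 0].
   The other: [f + L id] and its dual [x |-> - (f + L id) (- x)] are
   homogeneous and strictly monotone, so a Perron-Frobenius argument built on
   the Collatz-Wielandt infimum gives them positive eigenvectors [x]; then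
   [f x] and [f (- x)] are multiples of [x], necessarily nonpositive ones. *)

Section Vectors.
Variables (R : realType) (n : nat).
Local Notation vec := ('I_n -> R).

Definition vunit (j : 'I_n) : vec := fun i => (i == j)%:R.
Definition vopp (v : vec) : vec := fun i => - v i.
Definition vsum (v : vec) : R := \sum_i v i.

Lemma vsum_ge0 (v : vec) : (forall i, 0 <= v i) -> 0 <= vsum v.
Proof. by move=> v_ge0; apply: sumr_ge0 => i _. Qed.

Lemma le_vsum (v : vec) k : (forall i, 0 <= v i) -> v k <= vsum v.
Proof.
by move=> v_ge0; rewrite /vsum (bigD1 k) //= lerDl; apply: sumr_ge0 => i _.
Qed.

Lemma vunit_expand (z : vec) : (fun i => \sum_j z j * vunit j i) = z.
Proof.
apply/funext => i; rewrite (bigD1 i) //= /vunit eqxx mulr1 big1 ?addr0 // => j ji.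
by rewrite eq_sym (negbTE ji) mulr0.
Qed.

Lemma vadd_subr (x y : vec) : vadd x (fun i => y i - x i) = y.
Proof. by apply/funext => i; rewrite /vadd addrC subrK. Qed.
End Vectors.
Arguments vunit {R n} j.

Lemma exists_pos_lbound (R : realDomainType) (T : finType) (c : T -> R) (c0 : R) :
  0 < c0 -> (forall x, 0 < c x) -> exists r, [/\ 0 < r, r <= c0 & forall x, r <= c x].
Proof.
move=> c0_gt0 c_gt0; case: (pickP (fun _ : T => true)) => [x0 _ | T_empty].
  have [k _ k_min] := @arg_minP _ _ _ x0 (fun _ => true) c isT.
  exists (Num.min c0 (c k)); split; first by rewrite lt_min c0_gt0 c_gt0.
    by rewrite ge_min lexx.
  by move=> x; rewrite ge_min k_min ?orbT.
by exists c0; split => // x; have := T_empty x.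
Qed.

Lemma le_of_forall_le_addM (R : realFieldType) (x y c : R) : 0 <= c ->
  (forall e, 0 < e -> x <= y + e * c) -> x <= y.
Proof.
move=> c_ge0 x_le; apply/ler_addgt0Pr => e e_gt0.
have c1_gt0 : 0 < c + 1 by lra.
apply: le_trans (x_le (e / (c + 1)) (divr_gt0 e_gt0 c1_gt0)) _.
rewrite lerD2l mulrAC ler_pdivrMr // ler_pM2l //; lra.
Qed.

Section Superadditive.
Variables (R : realType) (n : nat).
Local Notation vec := ('I_n -> R).
Variable F : vec -> vec.
Hypothesis F_hom : forall t v, 0 < t -> F (vscale t v) = vscale t (F v).
Hypothesis F_superadd : forall v w i, F v i + F w i <= F (vadd v w) i.

Lemma hom_vcst0 : F (vcst 0) = vcst 0.
Proof.
have two_0 : vscale 2 (vcst 0) = vcst 0 :> vec.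
  by apply/funext => i; rewrite /vscale /vcst mulr0.
have := @F_hom 2 (vcst 0) (ltr0Sn R 1); rewrite two_0 => F0.
apply/funext => i; have := congr1 (fun f => f i) F0; rewrite /vscale /vcst /=; lra.
Qed.

Lemma hom_ge0 t v : 0 <= t -> F (vscale t v) = vscale t (F v).
Proof.
rewrite le_eqVlt => /predU1P [<-|]; last exact: F_hom.
have scale0 (w : vec) : vscale 0 w = vcst 0 by apply/funext => i; rewrite /vscale mul0r.
by rewrite !scale0 hom_vcst0.
Qed.

Lemma superadd_comb (s : seq 'I_n) (z : vec) (b : 'I_n -> vec) :
  (forall j, 0 <= z j) ->
  forall k, \sum_(j <- s) z j * F (b j) k <= F (fun i => \sum_(j <- s) z j * b j i) k.
Proof.
move=> z_ge0; elim: s => [|j s IHs] k.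
  rewrite big_nil; under eq_fun do rewrite big_nil.
  by rewrite -/(vcst 0) hom_vcst0.
have -> : (fun i => \sum_(j0 <- j :: s) z j0 * b j0 i) =
          vadd (vscale (z j) (b j)) (fun i => \sum_(j0 <- s) z j0 * b j0 i).
  by apply/funext => i; rewrite big_cons.
rewrite big_cons; apply: le_trans (F_superadd _ _ k).
by rewrite hom_ge0 // /vscale lerD2l.
Qed.

Lemma superadd_vunit (z : vec) : (forall j, 0 <= z j) ->
  forall k, \sum_j z j * F (vunit j) k <= F z k.
Proof.
by move=> z_ge0 k; have := superadd_comb (index_enum _) vunit z_ge0 k; rewrite vunit_expand.
Qed.

Lemma superadd_vopp_vunit (z : vec) : (forall j, 0 <= z j) ->
  forall k, \sum_j z j * F (vopp (vunit j)) k <= F (vopp z) k.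
Proof.
move=> z_ge0 k; have := superadd_comb (index_enum _) (fun j => vopp (vunit j)) z_ge0 k.
suff -> : (fun i => \sum_(j <- index_enum 'I_n) z j * vopp (vunit j) i) = vopp z by [].
apply/funext => i; under eq_bigr do rewrite /vopp mulrN.
by rewrite sumrN (congr1 (fun f => f i) (vunit_expand z)).
Qed.

Definition vopp_vunit_bound : R := \sum_i \sum_j `|F (vopp (vunit j)) i|.

Lemma vopp_vunit_bound_ge i j : `|F (vopp (vunit j)) i| <= vopp_vunit_bound.
Proof.
apply: le_trans (le_vsum i (fun i => sumr_ge0 _ (fun j _ => normr_ge0 _))).
exact: (le_vsum j (fun j => normr_ge0 (F (vopp (vunit j)) i))).
Qed.

Lemma opp_vopp_le_bound (z : vec) : (forall j, 0 <= z j) ->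
  forall i, - F (vopp z) i <= vopp_vunit_bound * vsum z.
Proof.
move=> z_ge0 i; rewrite lerNl; apply: le_trans (superadd_vopp_vunit z_ge0 i).
rewrite /vsum mulr_sumr -sumrN; apply: ler_sum => j _.
rewrite mulrC -mulrN ler_wpM2l // lerNl.
by apply: le_trans (vopp_vunit_bound_ge i j); rewrite -normrN ler_norm.
Qed.

Lemma superadd_ge_vsum dl : (forall i j, dl <= F (vunit j) i) ->
  forall z, (forall j, 0 <= z j) -> forall i, dl * vsum z <= F z i.
Proof.
move=> dl_le z z_ge0 i; apply: le_trans (superadd_vunit z_ge0 i).
by rewrite /vsum mulr_sumr; apply: ler_sum => j _; rewrite mulrC ler_wpM2l.
Qed.

Lemma superadd_ge_addr dl : (forall i j, dl <= F (vunit j) i) ->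
  forall x z, (forall j, 0 <= z j) -> forall i, F x i + dl * vsum z <= F (vadd x z) i.
Proof.
move=> dl_le x z z_ge0 i; apply: le_trans (F_superadd x z i).
by rewrite lerD2l superadd_ge_vsum.
Qed.

Lemma superadd_le_addr x z : (forall j, 0 <= z j) ->
  forall i, F (vadd x z) i <= F x i + vopp_vunit_bound * vsum z.
Proof.
move=> z_ge0 i; have := F_superadd (vadd x z) (vopp z) i.
have -> : vadd (vadd x z) (vopp z) = x by apply/funext => j; rewrite /vadd /vopp addrK.
have := opp_vopp_le_bound z_ge0 i; lra.
Qed.

Definition vdual (x : vec) : vec := vopp (F (vopp x)).

Lemma vdual_hom t v : 0 < t -> vdual (vscale t v) = vscale t (vdual v).
Proof.
move=> t_gt0; have vopp_scale (w : vec) : vopp (vscale t w) = vscale t (vopp w).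
  by apply/funext => i; rewrite /vopp /vscale mulrN.
by rewrite /vdual vopp_scale F_hom // vopp_scale.
Qed.

Lemma vdual_ge_addr dl : (forall i j, dl <= F (vunit j) i) ->
  forall x z, (forall j, 0 <= z j) -> forall i, vdual x i + dl * vsum z <= vdual (vadd x z) i.
Proof.
move=> dl_le x z z_ge0 i; have := F_superadd (vopp (vadd x z)) z i.
have -> : vadd (vopp (vadd x z)) z = vopp x.
  by apply/funext => j; rewrite /vadd /vopp opprD addrNK.
have := superadd_ge_vsum dl_le z_ge0 i; rewrite /vdual /vopp; lra.
Qed.

Lemma vdual_le_addr x z : (forall j, 0 <= z j) ->
  forall i, vdual (vadd x z) i <= vdual x i + vopp_vunit_bound * vsum z.
Proof.
move=> z_ge0 i; have := F_superadd (vopp x) (vopp z) i.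
have -> : vadd (vopp x) (vopp z) = vopp (vadd x z).
  by apply/funext => j; rewrite /vadd /vopp opprD.
have := opp_vopp_le_bound z_ge0 i; rewrite /vdual /vopp; lra.
Qed.
End Superadditive.

Section PerronFrobenius.
Variables (R : realType) (n : nat).
Local Notation vec := ('I_n -> R).
Variables (M : vec -> vec) (dl K : R).
Hypothesis n_gt0 : (0 < n)%N.
Hypothesis M_hom : forall t v, 0 < t -> M (vscale t v) = vscale t (M v).
Hypothesis dl_gt0 : 0 < dl.
Hypothesis M_ge_addr : forall x z, (forall j, 0 <= z j) ->
  forall i, M x i + dl * vsum z <= M (vadd x z) i.
Hypothesis M_le_addr : forall x z, (forall j, 0 <= z j) ->
  forall i, M (vadd x z) i <= M x i + K * vsum z.

Let i0 : 'I_n := Ordinal n_gt0.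

Lemma M_ge_vsum v : (forall j, 0 <= v j) -> forall i, dl * vsum v <= M v i.
Proof.
move=> v_ge0 i; have := M_ge_addr (vcst 0) v_ge0 i.
have -> : vadd (vcst 0) v = v by apply/funext => j; rewrite /vadd /vcst add0r.
by rewrite (hom_vcst0 M_hom) /vcst add0r.
Qed.

Lemma M_mono x y : vle x y -> forall i, M x i <= M y i.
Proof.
move=> x_le_y i; have z_ge0 j : 0 <= y j - x j by rewrite subr_ge0.
rewrite -(vadd_subr x y); apply: le_trans (M_ge_addr x z_ge0 i).
by rewrite lerDl mulr_ge0 ?vsum_ge0 // ltW.
Qed.

Lemma M_le_add_vsum x y : vle x y ->
  forall i, M y i <= M x i + K * vsum (fun j => y j - x j).
Proof.
by move=> x_le_y i; rewrite -{1}(vadd_subr x y); apply: M_le_addr => j; rewrite subr_ge0.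
Qed.

Lemma vsum_vcst1 : vsum (vcst 1 : vec) = n%:R.
Proof. by rewrite /vsum /vcst sumr_const card_ord. Qed.

Lemma M_vcst1_le i : M (vcst 1) i <= K * n%:R.
Proof.
have := M_le_addr (vcst 0) (z := vcst 1) (fun j => ler01) i.
have -> : vadd (vcst 0) (vcst 1) = vcst 1 :> vec.
  by apply/funext => j; rewrite /vadd /vcst add0r.
by rewrite (hom_vcst0 M_hom) {1}/vcst add0r vsum_vcst1.
Qed.

Lemma K_ge0 : 0 <= K.
Proof.
have n_pos : 0 < n%:R :> R by rewrite ltr0n.
have := M_ge_vsum (v := vcst 1) (fun j => ler01) i0.
rewrite vsum_vcst1 => /le_trans /(_ (M_vcst1_le i0)).
by rewrite ler_pM2r // => /(le_trans (ltW dl_gt0)).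
Qed.

Definition subeigenvalues :=
  [set l : R | exists2 v : vec, vlt (vcst 0) v & forall i, M v i <= l * v i].

Definition pf_root := inf subeigenvalues.

Lemma subeigenvalue_ge l : subeigenvalues l -> dl <= l.
Proof.
move=> [v v_gt0 Mv_le]; have v_ge0 j : 0 <= v j by exact: ltW (v_gt0 j).
rewrite -(ler_pM2r (v_gt0 i0)); apply: le_trans (Mv_le i0).
apply: le_trans (M_ge_vsum v_ge0 i0); rewrite ler_pM2l //; exact: le_vsum.
Qed.

Lemma vcst1_subeigenvalue : subeigenvalues (K * n%:R).
Proof. by exists (vcst 1) => i; rewrite /vcst ?ltr01 // mulr1 M_vcst1_le. Qed.

Lemma pf_root_ge : dl <= pf_root.
Proof.
apply: lb_le_inf; first by exists (K * n%:R); exact: vcst1_subeigenvalue.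
exact: subeigenvalue_ge.
Qed.

Lemma pf_root_le l : subeigenvalues l -> pf_root <= l.
Proof. by move=> l_sub; apply: ge_inf => //; exists dl => m; exact: subeigenvalue_ge. Qed.

Lemma pf_root_gt0 : 0 < pf_root.
Proof. exact: lt_le_trans dl_gt0 pf_root_ge. Qed.

Definition normal_subeigvecs l :=
  [set v : vec | [/\ vlt (vcst 0) v, vsum v = 1 & forall i, M v i <= l * v i]].

Lemma normal_subeigvec_exists l : pf_root < l -> exists v, normal_subeigvecs l v.
Proof.
move=> root_lt; have [l' [v v_gt0 Mv_le] l'_lt] :=
  inf_lt (ex_intro _ _ vcst1_subeigenvalue) root_lt.
have s_gt0 : 0 < vsum v.
  by apply: lt_le_trans (v_gt0 i0) (le_vsum _ (fun j => ltW (v_gt0 j))).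
have si_gt0 : 0 < (vsum v)^-1 by rewrite invr_gt0.
exists (vscale (vsum v)^-1 v); split.
- by move=> i; apply: mulr_gt0 => //; exact: v_gt0.
- by rewrite /vsum /vscale -mulr_sumr mulVf ?gt_eqF.
- move=> i; rewrite M_hom // /vscale mulrCA ler_pM2l //.
  apply: le_trans (Mv_le i) _; apply: ler_wpM2r; [exact: ltW (v_gt0 i) | exact: ltW].
Qed.

Lemma normal_subeigvec_bounds l v i : pf_root < l -> normal_subeigvecs l v ->
  dl / l <= v i <= 1.
Proof.
move=> root_lt [v_gt0 v_sum Mv_le]; have v_ge0 j : 0 <= v j by exact: ltW (v_gt0 j).
have l_gt0 : 0 < l := lt_trans pf_root_gt0 root_lt.
rewrite ler_pdivrMr // -v_sum le_vsum // andbT.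
have := M_ge_vsum v_ge0 i; rewrite v_sum mulr1 mulrC => /le_trans; apply; exact: Mv_le.
Qed.

Definition lower_env l : vec := fun i => inf [set v i | v in normal_subeigvecs l].

Lemma lower_env_le l v i : normal_subeigvecs l v -> lower_env l i <= v i.
Proof.
move=> v_in; apply: ge_inf; last by exists v.
by exists 0 => _ [w [w_gt0 _ _] <-]; exact: ltW (w_gt0 _).
Qed.

Lemma lower_env_ge l i : pf_root < l -> dl / l <= lower_env l i.
Proof.
move=> root_lt; apply: lb_le_inf.
  by have [v v_in] := normal_subeigvec_exists root_lt; exists (v i), v.
by move=> _ [v v_in <-]; have /andP[] := normal_subeigvec_bounds i root_lt v_in.
Qed.

Lemma lower_env_le1 l i : pf_root < l -> lower_env l i <= 1.
Proof.
move=> root_lt; have [v v_in] := normal_subeigvec_exists root_lt.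
apply: le_trans (lower_env_le i v_in) _.
by have /andP[] := normal_subeigvec_bounds i root_lt v_in.
Qed.

Lemma lower_env_subeig l i : pf_root < l -> M (lower_env l) i <= l * lower_env l i.
Proof.
move=> root_lt; have l_gt0 : 0 < l := lt_trans pf_root_gt0 root_lt.
rewrite mulrC -ler_pdivrMr //; apply: lb_le_inf.
  by have [v v_in] := normal_subeigvec_exists root_lt; exists (v i), v.
move=> _ [v v_in <-]; rewrite ler_pdivrMr // mulrC.
have [_ _ Mv_le] := v_in; apply: le_trans (Mv_le i).
by apply: M_mono => j; exact: lower_env_le.
Qed.

Lemma lower_env_antimono l m i : pf_root < l -> l <= m -> lower_env m i <= lower_env l i.
Proof.
move=> root_lt l_le_m; apply: lb_le_inf.
  by have [v v_in] := normal_subeigvec_exists root_lt; exists (v i), v.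
move=> _ [v [v_gt0 v_sum Mv_le] <-]; apply: lower_env_le; split => // j.
by apply: le_trans (Mv_le j) _; apply: ler_wpM2r => //; exact: ltW (v_gt0 j).
Qed.

(* The componentwise limit of [lower_env l] as [l] decreases to [pf_root]
   replaces the usual compactness argument. *)
Definition pf_vec : vec :=
  fun i => sup [set lower_env l i | l in [set l | pf_root < l]].

Lemma root_lt_root1 : pf_root < pf_root + 1.
Proof. by rewrite ltrDl. Qed.

Lemma pf_vec_has_sup i : has_sup [set lower_env l i | l in [set l | pf_root < l]].
Proof.
split; last by exists 1 => _ [l root_lt <-]; exact: lower_env_le1.
by exists (lower_env (pf_root + 1) i), (pf_root + 1); last by []; exact: root_lt_root1.
Qed.

Lemma lower_env_le_pf_vec l i : pf_root < l -> lower_env l i <= pf_vec i.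
Proof. by move=> root_lt; apply: ub_le_sup; [exact: (pf_vec_has_sup i).2 | exists l]. Qed.

Lemma pf_vec_le1 i : pf_vec i <= 1.
Proof.
apply: ge_sup; first exact: (pf_vec_has_sup i).1.
by move=> _ [l root_lt <-]; exact: lower_env_le1.
Qed.

Lemma pf_vec_gt0 i : 0 < pf_vec i.
Proof.
apply: lt_le_trans (lower_env_le_pf_vec i root_lt_root1).
apply: lt_le_trans (lower_env_ge i root_lt_root1).
by rewrite divr_gt0 // (lt_trans pf_root_gt0 root_lt_root1).
Qed.

Lemma pf_vec_approx eta : 0 < eta -> exists l,
  [/\ pf_root < l, l <= pf_root + eta & forall i, pf_vec i <= lower_env l i + eta].
Proof.
move=> eta_gt0.
have near_sup i : exists l, pf_root < l /\ pf_vec i - eta < lower_env l i.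
  by have [_ [l root_lt <-] lt_env] := sup_adherent eta_gt0 (pf_vec_has_sup i); exists l.
have [l_ l_spec] := fin_all_exists near_sup.
have gap_gt0 i : 0 < l_ i - pf_root by rewrite subr_gt0; case: (l_spec i).
have [r [r_gt0 r_le_eta r_le_gap]] := exists_pos_lbound eta_gt0 gap_gt0.
have root_lt : pf_root < pf_root + r by rewrite ltrDl.
exists (pf_root + r); split; rewrite ?lerD2l // => i.
have [_ lt_env] := l_spec i.
have := lower_env_antimono i root_lt (_ : pf_root + r <= l_ i); move: (r_le_gap i); lra.
Qed.

Lemma pf_vec_subeig i : M pf_vec i <= pf_root * pf_vec i.
Proof.
apply: (@le_of_forall_le_addM _ _ _ (pf_vec i + K * n%:R)).
  by rewrite addr_ge0 ?mulr_ge0 ?ler0n ?K_ge0 // ltW ?pf_vec_gt0.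
move=> e e_gt0; have [l [root_lt l_le approx]] := pf_vec_approx e_gt0.
have env_le : vle (lower_env l) pf_vec by move=> j; exact: lower_env_le_pf_vec.
have gap_le : vsum (fun j => pf_vec j - lower_env l j) <= e * n%:R.
  apply: (@le_trans _ _ (\sum_(j < n) e)); last by rewrite sumr_const card_ord mulr_natr.
  by apply: ler_sum => j _; have := approx j; lra.
have Mgap := M_le_add_vsum env_le i.
have Menv := lower_env_subeig i root_lt.
have env_scaled : l * lower_env l i <= (pf_root + e) * pf_vec i.
  apply: (@le_trans _ _ (l * pf_vec i)).
    by rewrite ler_pM2l ?env_le // (lt_trans pf_root_gt0 root_lt).
  by rewrite ler_pM2r ?pf_vec_gt0.
have Kgap : K * vsum (fun j => pf_vec j - lower_env l j) <= K * (e * n%:R).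
  by rewrite ler_wpM2l ?K_ge0.
nra.
Qed.

Lemma pf_vec_defect_vsum : vsum (fun j => pf_root * pf_vec j - M pf_vec j) <= 0.
Proof.
set d := fun j => pf_root * pf_vec j - M pf_vec j.
have d_ge0 j : 0 <= d j by rewrite subr_ge0 pf_vec_subeig.
rewrite leNgt; apply/negP => sd_gt0; have root_gt0 := pf_root_gt0.
have pf_vec_ge0 j : 0 <= pf_vec j by exact: ltW (pf_vec_gt0 j).
have d_le j : d j <= pf_root * pf_vec j.
  rewrite /d gerBl; apply: le_trans (M_ge_vsum pf_vec_ge0 j).
  by rewrite mulr_ge0 ?vsum_ge0 // ltW.
(* Otherwise [w := pf_vec - eta * d] witnesses a subeigenvalue [pf_root - c < pf_root]. *)
set eta := (2 * pf_root)^-1.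
have eta_gt0 : 0 < eta by rewrite invr_gt0 mulr_gt0.
have root_eta j : pf_root * (eta * d j) = d j / 2.
  by rewrite /eta mulrA invfM mulrCA mulfV ?gt_eqF // mulr1 mulrC.
set w := fun j => pf_vec j - eta * d j.
have ed_ge0 j : 0 <= eta * d j by rewrite mulr_ge0 // ltW.
have w_gt0 j : 0 < w j.
  by have := d_le j; have := pf_vec_gt0 j; have := root_eta j; rewrite /w; nra.
have w_le1 j : w j <= 1 by have := pf_vec_le1 j; have := ed_ge0 j; rewrite /w; lra.
set c := dl * (eta * vsum d).
have c_gt0 : 0 < c by rewrite !mulr_gt0.
suff : subeigenvalues (pf_root - c) by move/pf_root_le; lra.
exists w => // j; have := M_ge_addr w ed_ge0 j.
have -> : vadd w (fun k => eta * d k) = pf_vec by apply/funext => k; rewrite /vadd /w subrK.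
rewrite /vsum -mulr_sumr -/(vsum d) -/c.
have cw_le : c * w j <= c by rewrite ger_pMr.
have -> : (pf_root - c) * w j = pf_root * pf_vec j - pf_root * (eta * d j) - c * w j.
  by rewrite /w; ring.
have dj : d j = pf_root * pf_vec j - M pf_vec j by [].
by have := root_eta j; have := d_ge0 j; lra.
Qed.

Lemma pf_vec_eigen i : M pf_vec i = pf_root * pf_vec i.
Proof.
have defect_ge0 j : 0 <= pf_root * pf_vec j - M pf_vec j by rewrite subr_ge0 pf_vec_subeig.
have := le_vsum i defect_ge0; have := pf_vec_defect_vsum; have := defect_ge0 i; lra.
Qed.

Theorem exists_pos_eigenvector :
  exists (v : vec) (r : R), vlt (vcst 0) v /\ forall i, M v i = r * v i.
Proof. by exists pf_vec, pf_root; split; [exact: pf_vec_gt0 | exact: pf_vec_eigen]. Qed.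
End PerronFrobenius.

Section Alternative.
Variables (R : realType) (n : nat).
Local Notation vec := ('I_n -> R).
Variable f : vec -> vec.
Hypothesis f_hom : forall t v, 0 < t -> f (vscale t v) = vscale t (f v).
Hypothesis f_superadd : forall v w i, f v i + f w i <= f (vadd v w) i.
Hypothesis f_offdiag : forall i j, i != j -> 0 < f (vunit j) i.

Lemma eigen_sign w x c : vlt (vcst 0) x -> (forall i, f w i = c * x i) ->
  vle (f w) (vcst 0) \/ forall i, 0 < f w i.
Proof.
move=> x_gt0 fw_eq; have [c_le0|c_gt0] := leP c 0.
  by left => i; rewrite fw_eq /vcst mulr_le0_ge0 // ltW // x_gt0.
by right => i; rewrite fw_eq mulr_gt0 // x_gt0.
Qed.

(* Adding [L * id] makes every [g (vunit j)] positive, so that the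
   Perron-Frobenius theorem applies to [g] and to its dual. *)
Let L := 1 + \sum_i `|f (vunit i) i|.
Let g (v : vec) : vec := fun i => f v i + L * v i.

Let g_hom t v : 0 < t -> g (vscale t v) = vscale t (g v).
Proof. by move=> t_gt0; apply/funext => i; rewrite /g f_hom // /vscale mulrDr mulrCA. Qed.

Let g_superadd v w i : g v i + g w i <= g (vadd v w) i.
Proof. by rewrite /g /vadd mulrDr; have := f_superadd v w i; lra. Qed.

Let g_vunit_gt0 i j : 0 < g (vunit j) i.
Proof.
rewrite /g /vunit; have [->|ij] := eqVneq i j; last by rewrite mulr0 addr0 f_offdiag.
rewrite mulr1 /L; have := le_vsum j (fun k => normr_ge0 (f (vunit k) k)).
by rewrite /vsum; have := ler_norm (- f (vunit j) j); rewrite normrN; lra.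
Qed.

Let g_vunit_lbound : exists2 dl, 0 < dl & forall i j, dl <= g (vunit j) i.
Proof.
have [dl [dl_gt0 _ dl_le]] := exists_pos_lbound
  (c := fun p : 'I_n * 'I_n => g (vunit p.2) p.1) ltr01 (fun p => g_vunit_gt0 _ _).
by exists dl => // i j; exact: (dl_le (i, j)).
Qed.

Lemma exists_pos_nonpos_dir : (0 < n)%N -> ~ (exists w, forall i, 0 < f w i) ->
  exists v, vlt (vcst 0) v /\ vle (f v) (vcst 0).
Proof.
move=> n_gt0 no_dir; have [dl dl_gt0 dl_le] := g_vunit_lbound.
have [v [r [v_gt0 gv_eq]]] := exists_pos_eigenvector n_gt0 g_hom dl_gt0
  (superadd_ge_addr g_hom g_superadd dl_le) (superadd_le_addr g_hom g_superadd).
have fv_eq i : f v i = (r - L) * v i by have := gv_eq i; rewrite /g; lra.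
exists v; split => //; have [//|fv_gt0] := eigen_sign v_gt0 fv_eq.
by case: no_dir; exists v.
Qed.

Lemma exists_neg_nonpos_dir : (0 < n)%N -> ~ (exists w, forall i, 0 < f w i) ->
  exists p, vlt p (vcst 0) /\ vle (f p) (vcst 0).
Proof.
move=> n_gt0 no_dir; have [dl dl_gt0 dl_le] := g_vunit_lbound.
have [x [r [x_gt0 gx_eq]]] := exists_pos_eigenvector n_gt0 (vdual_hom g_hom) dl_gt0
  (vdual_ge_addr g_hom g_superadd dl_le) (vdual_le_addr g_hom g_superadd).
have fx_eq i : f (vopp x) i = (L - r) * x i.
  by have := gx_eq i; rewrite /vdual /g /vopp; lra.
exists (vopp x); split; first by move=> i; rewrite /vopp /vcst oppr_lt0 x_gt0.
have [//|fx_gt0] := eigen_sign x_gt0 fx_eq.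
by case: no_dir; exists (vopp x).
Qed.

Lemma nonpos_at_touching q w k : vle (f q) (vcst 0) -> vle w q -> w k = q k ->
  f w k <= 0.
Proof.
move=> fq_le w_le wk_eq; set z : vec := fun i => q i - w i.
have z_ge0 j : 0 <= z j by rewrite subr_ge0 w_le.
have fz_ge0 : 0 <= f z k.
  apply: le_trans (superadd_vunit f_hom f_superadd z_ge0 k); apply: sumr_ge0 => j _.
  have [->|jk] := eqVneq j k; first by rewrite /z wk_eq subrr mul0r.
  by rewrite mulr_ge0 // ltW // f_offdiag // eq_sym.
have := f_superadd w z k; rewrite vadd_subr; have := fq_le k; rewrite /vcst; lra.
Qed.

Lemma exists_touching_multiple (i0 : 'I_n) (v w : vec) : vlt (vcst 0) v ->
  exists k s, vle w (vscale s v) /\ w k = s * v k.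
Proof.
move=> v_gt0; have {}v_gt0 i : 0 < v i := v_gt0 i.
have [k _ k_max] := @arg_maxP _ _ _ i0 (fun _ => true) (fun i => w i / v i) isT.
exists k, (w k / v k); split => [i|]; last by rewrite divfK // gt_eqF.
by rewrite /vscale -ler_pdivrMr //; exact: k_max.
Qed.

Lemma no_pos_dir (i0 : 'I_n) v p : vlt (vcst 0) v -> vle (f v) (vcst 0) ->
  vlt p (vcst 0) -> vle (f p) (vcst 0) -> ~ exists w, forall i, 0 < f w i.
Proof.
move=> v_gt0 fv_le p_lt0 fp_le [w fw_gt0].
have scale_nonpos q t : 0 <= t -> vle (f q) (vcst 0) -> vle (f (vscale t q)) (vcst 0).
  by move=> t_ge0 fq_le i; rewrite hom_ge0 // /vscale /vcst mulr_ge0_le0 // fq_le.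
have [k [s [w_le wk_eq]]] := exists_touching_multiple i0 w v_gt0.
have [s_ge0|s_lt0] := leP 0 s.
  have := nonpos_at_touching (scale_nonpos v s s_ge0 fv_le) w_le wk_eq.
  by have := fw_gt0 k; lra.
(* Otherwise [w < 0], and [w] touches a positive multiple of [p] from below. *)
have w_lt0 i : w i < 0.
  by apply: le_lt_trans (w_le i) _; rewrite /vscale nmulr_rlt0 // v_gt0.
have mp_gt0 : vlt (vcst 0) (vopp p) by move=> i; rewrite /vopp /vcst oppr_gt0 p_lt0.
have [k' [s' [w_le' wk_eq']]] := exists_touching_multiple i0 w mp_gt0.
have s'_lt0 : s' < 0 by have := w_lt0 k'; rewrite wk_eq' pmulr_llt0 // mp_gt0.
have neg_scale : vscale s' (vopp p) = vscale (- s') p.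
  by apply/funext => i; rewrite /vscale /vopp mulrN mulNr.
rewrite neg_scale in w_le'; rewrite -[_ * _]/(vscale s' (vopp p) k') neg_scale in wk_eq'.
have := nonpos_at_touching (scale_nonpos p (- s') _ fp_le) w_le' wk_eq'.
by have := fw_gt0 k'; rewrite oppr_ge0 ltW //; lra.
Qed.

Theorem homogeneous_alternative : (0 < n)%N ->
  (~ exists w, forall i, 0 < f w i) <->
  (exists v, vlt (vcst 0) v /\ vle (f v) (vcst 0)) /\
  (exists p, vlt p (vcst 0) /\ vle (f p) (vcst 0)).
Proof.
move=> n_gt0; split => [no_dir | [[v [v_gt0 fv_le]] [p [p_lt0 fp_le]]]].
  by split; [exact: exists_pos_nonpos_dir | exact: exists_neg_nonpos_dir].
exact: (no_pos_dir (Ordinal n_gt0) v_gt0 fv_le p_lt0 fp_le).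
Qed.

Lemma pos_dir_of_nonneg_dir w j : (forall i, 0 <= f w i) -> 0 < f w j ->
  exists w', forall i, 0 < f w' i.
Proof.
move=> fw_ge0 fwj_gt0; set c := f (vunit j) j.
have c1_gt0 : 0 < 1 + `|c| by rewrite ltr_pwDl.
set e := f w j / (1 + `|c|).
have e_gt0 : 0 < e by rewrite divr_gt0.
have ec_lt : e * `|c| < f w j by rewrite /e mulrAC ltr_pdivrMr // ltr_pM2l //; lra.
exists (vadd w (vscale e (vunit j))) => i; apply: lt_le_trans (f_superadd _ _ i).
rewrite f_hom // /vscale; have [->|ij] := eqVneq i j.
  have : e * - `|c| <= e * c by rewrite ler_pM2l // lerNl -normrN ler_norm.
  rewrite -/c; lra.
by apply: ltr_pwDr; [rewrite mulr_gt0 // f_offdiag | exact: fw_ge0].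
Qed.
End Alternative.

Section Margin.
Variables (R : realType) (n : nat).
Local Notation vec := ('I_n -> R).

Definition margin (a : vec) : R := \big[Num.min/1]_i Num.min (a i) (1 - a i).

Lemma margin_gt0 a : vlt (vcst 0) a -> vlt a (vcst 1) -> 0 < margin a.
Proof.
move=> a_gt0 a_lt1; apply/bigmin_gtP; split => // i _.
by rewrite lt_min subr_gt0; apply/andP; split; [exact: a_gt0 | exact: a_lt1].
Qed.

Lemma margin_le a i : margin a <= a i /\ margin a <= 1 - a i.
Proof.
have : margin a <= Num.min (a i) (1 - a i) by exact: bigmin_le.
by rewrite le_min => /andP.
Qed.
End Margin.

Lemma near_at_right0_scale (R : realType) (t : R) (P : R -> Prop) : 0 < t ->
  (\forall l \near (0 : R)^'+, P l) -> \forall l \near (0 : R)^'+, P (t * l).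
Proof.
move=> t_gt0 [e /= e_gt0 Pe]; exists (e / t) => [|l /=]; first by rewrite /= divr_gt0.
rewrite sub0r normrN => l_lt l_gt0; apply: Pe; last by rewrite mulr_gt0.
by rewrite /= sub0r normrN normrM gtr0_norm // mulrC -ltr_pdivlMr.
Qed.

Lemma cvg_at_right0_scale (R : realType) (t d : R) (q : R -> R) : 0 < t ->
  q @ (0 : R)^'+ --> d -> (fun l => q (t * l)) @ (0 : R)^'+ --> d.
Proof. by move=> t_gt0 qd P /qd; exact: near_at_right0_scale. Qed.

Section DirectionalDerivative.
Variables (R : realType) (n : nat).
Local Notation vec := ('I_n -> R).
Variables (u : vec -> vec) (a : vec).
Hypothesis u_concave : concave_on_cube u.
Hypothesis a_gt0 : vlt (vcst 0) a.
Hypothesis a_lt1 : vlt a (vcst 1).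

Definition ray (v : vec) (l : R) : vec := vadd a (vscale l v).
Definition diffq (v : vec) i (l : R) : R := (u (ray v l) i - u a i) / l.
Definition dderiv (v : vec) : vec := fun i => lim (diffq v i @ (0 : R)^'+).

Definition step (v : vec) : R := margin a / (1 + vsum (fun j => `|v j|)).

Lemma step_gt0 v : 0 < step v.
Proof. by rewrite divr_gt0 ?margin_gt0 // ltr_pwDl // vsum_ge0. Qed.

Lemma outcome_ray v l : `|l| <= step v -> outcome (ray v l).
Proof.
move=> l_le j; set S := 1 + vsum (fun j => `|v j|).
have S_gt0 : 0 < S by rewrite ltr_pwDl // vsum_ge0.
have vj_le : `|v j| <= S.
  by apply: le_trans (le_vsum j (fun k => normr_ge0 (v k))) _; rewrite lerDr.
have : `|l * v j| <= margin a.
  rewrite normrM -(divfK (lt0r_neq0 S_gt0) (margin a)) -/(step v).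
  by apply: ler_pM => //; exact: ltW (step_gt0 v).
rewrite ler_norml /ray /vadd /vscale => /andP [lo hi].
by have [ma_le m1a_le] := margin_le a j; apply/andP; split; lra.
Qed.

Lemma outcome_a : outcome a.
Proof. by move=> j; apply/andP; split; apply: ltW; [exact: a_gt0 | exact: a_lt1]. Qed.

Lemma near_outcome_ray v : \forall l \near (0 : R)^'+, outcome (ray v l).
Proof.
near=> l; apply: outcome_ray; rewrite gtr0_norm; last by near: l; exact: nbhs_right_gt.
by near: l; exact: nbhs_right_le (step_gt0 v).
Unshelve. all: by end_near. Qed.

Lemma diffq_nonincr v i l1 l2 : 0 < l1 -> l1 <= l2 -> outcome (ray v l2) ->
  diffq v i l2 <= diffq v i l1.
Proof.
move=> l1_gt0 l12 out2; have l2_gt0 := lt_le_trans l1_gt0 l12.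
set t := l1 / l2.
have t01 : 0 <= t <= 1.
  by rewrite /t divr_ge0 ?(ltW l1_gt0) ?(ltW l2_gt0) //= ler_pdivrMr // mul1r.
have ray_l1 : ray v l1 = vadd (vscale t (ray v l2)) (vscale (1 - t) a).
  by apply/funext => j; rewrite /ray /vadd /vscale /t; field; rewrite gt_eqF.
have := u_concave out2 outcome_a t01 i; rewrite -ray_l1 /vadd /vscale /diffq ler_pdivlMr //.
have -> : (u (ray v l2) i - u a i) / l2 * l1 = t * u (ray v l2) i + (1 - t) * u a i - u a i.
  by rewrite /t; field; rewrite gt_eqF.
lra.
Qed.

Lemma diffq_le_backward v i l m : 0 < l -> 0 < m ->
  outcome (ray v l) -> outcome (ray v (- m)) ->
  diffq v i l <= (u a i - u (ray v (- m)) i) / m.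
Proof.
move=> l_gt0 m_gt0 out_l out_m; have lm_gt0 : 0 < l + m by rewrite addr_gt0.
set t := m / (l + m).
have t01 : 0 <= t <= 1.
  by rewrite /t divr_ge0 ?(ltW m_gt0) ?(ltW lm_gt0) //= ler_pdivrMr // mul1r lerDr ltW.
have a_eq : a = vadd (vscale t (ray v l)) (vscale (1 - t) (ray v (- m))).
  by apply/funext => j; rewrite /ray /vadd /vscale /t; field; rewrite gt_eqF.
have := u_concave out_l out_m t01 i; rewrite -a_eq /vadd /vscale.
move=> /(ler_wpM2l (ltW lm_gt0)).
have -> : (l + m) * (t * u (ray v l) i + (1 - t) * u (ray v (- m)) i)
          = m * u (ray v l) i + l * u (ray v (- m)) i.
  by rewrite /t; field; rewrite gt_eqF.
rewrite /diffq ler_pdivrMr // mulrAC ler_pdivlMr //; nra.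
Qed.

Lemma diffq_cvg v i : diffq v i @ (0 : R)^'+ --> dderiv v i.
Proof.
apply/cvgP/(@nonincreasing_at_right_cvgr _ _ _ (BRight (step v))).
- by rewrite bnd_simp step_gt0.
- move=> l1 l2; rewrite !in_itv /= => /andP [l1_gt0 _] /andP [l2_gt0 l2_le] l12.
  apply: (diffq_nonincr i l1_gt0 l12).
  by apply: outcome_ray; rewrite gtr0_norm.
- exists ((u a i - u (ray v (- step v)) i) / step v) => _ [l + <-].
  rewrite /= in_itv /= => /andP [l_gt0 l_le].
  apply: diffq_le_backward => //; [exact: step_gt0 | | ]; apply: outcome_ray.
    by rewrite gtr0_norm.
  by rewrite normrN gtr0_norm // step_gt0.
Qed.

Lemma dderiv_dir_deriv v : dir_deriv u a v (dderiv v).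
Proof. move=> i; exact: diffq_cvg. Qed.

Lemma dir_deriv_unique v d : dir_deriv u a v d -> d = dderiv v.
Proof. by move=> vd; apply/funext => i; rewrite /dderiv (cvg_lim _ (vd i)). Qed.

Lemma diffq_le_dderiv v i (l : R) : 0 < l -> outcome (ray v l) -> diffq v i l <= dderiv v i.
Proof.
move=> l_gt0 out_l; apply: ler_cvg_to (cvg_cst _) (@diffq_cvg v i) _.
near=> l'; apply: diffq_nonincr out_l; near: l'; first exact: nbhs_right_gt.
exact: nbhs_right_le.
Unshelve. all: by end_near. Qed.

Lemma diffq_scale t v i l : 0 < t -> diffq (vscale t v) i l = t * diffq v i (t * l).
Proof.
move=> t_gt0; rewrite /diffq; have -> : ray (vscale t v) l = ray v (t * l).
  by apply/funext => j; rewrite /ray /vadd /vscale mulrA (mulrC l).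
by rewrite invfM mulrCA mulVKf ?gt_eqF.
Qed.

Lemma dderiv_scale t v : 0 < t -> dderiv (vscale t v) = vscale t (dderiv v).
Proof.
move=> t_gt0; apply/esym/dir_deriv_unique => i.
rewrite -/(diffq (vscale t v) i) (_ : diffq (vscale t v) i = fun l => t * diffq v i (t * l)).
  exact: cvgMl_tmp (cvg_at_right0_scale t_gt0 (@diffq_cvg v i)).
by apply/funext => l; exact: diffq_scale.
Qed.

Lemma diffq_concave v w t i l : 0 < l -> 0 <= t <= 1 ->
  outcome (ray v l) -> outcome (ray w l) ->
  t * diffq v i l + (1 - t) * diffq w i l
    <= diffq (vadd (vscale t v) (vscale (1 - t) w)) i l.
Proof.
move=> l_gt0 t01 out_v out_w.
have ray_mix : ray (vadd (vscale t v) (vscale (1 - t) w)) l =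
    vadd (vscale t (ray v l)) (vscale (1 - t) (ray w l)).
  by apply/funext => j; rewrite /ray /vadd /vscale; ring.
have := u_concave out_v out_w t01 i; rewrite -ray_mix /vadd /vscale /diffq.
have -> : t * ((u (ray v l) i - u a i) / l) + (1 - t) * ((u (ray w l) i - u a i) / l)
    = (t * u (ray v l) i + (1 - t) * u (ray w l) i - u a i) / l by ring.
by rewrite ler_pM2r ?invr_gt0 //; lra.
Qed.

Lemma dderiv_concave v w t i : 0 <= t <= 1 ->
  t * dderiv v i + (1 - t) * dderiv w i <= dderiv (vadd (vscale t v) (vscale (1 - t) w)) i.
Proof.
move=> t01; apply: ler_cvg_to (cvgD (cvgMl_tmp (a := t) (@diffq_cvg v i))
  (cvgMl_tmp (a := 1 - t) (@diffq_cvg w i))) (@diffq_cvg _ i) _.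
near=> l; rewrite fctE.
have l_gt0 : 0 < l by near: l; exact: nbhs_right_gt.
have out_v : outcome (ray v l) by near: l; exact: near_outcome_ray.
have out_w : outcome (ray w l) by near: l; exact: near_outcome_ray.
exact: (diffq_concave i l_gt0 t01 out_v out_w).
Unshelve. all: by end_near. Qed.

Lemma dderiv_superadd v w i : dderiv v i + dderiv w i <= dderiv (vadd v w) i.
Proof.
have half01 : 0 <= (2^-1 : R) <= 1.
  by apply/andP; split; [rewrite invr_ge0 ler0n | rewrite invf_le1 // ler1n].
have half_sum : vadd v w = vscale 2 (vadd (vscale 2^-1 v) (vscale (1 - 2^-1) w)).
  by apply/funext => j; rewrite /vadd /vscale; field.
rewrite half_sum dderiv_scale // /vscale.
have := dderiv_concave v w i half01; have -> : 1 - 2^-1 = 2^-1 :> R by field.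
lra.
Qed.

Lemma dderiv_ge_gain a' : outcome a' ->
  forall i, u a' i - u a i <= dderiv (fun j => a' j - a j) i.
Proof.
move=> out' i; have ray1 : ray (fun j => a' j - a j) 1 = a'.
  by apply/funext => j; rewrite /ray /vadd /vscale mul1r addrC subrK.
have := diffq_le_dderiv i ltr01 (_ : outcome (ray (fun j => a' j - a j) 1)).
by rewrite /diffq ray1 divr1; apply.
Qed.

Hypothesis u_ext : positive_externalities u.

Lemma dderiv_vunit_offdiag i j : i != j -> 0 < dderiv (vunit j) i.
Proof.
move=> ij; set l := step (vunit j); have l_gt0 : 0 < l := step_gt0 _.
have out_l : outcome (ray (vunit j) l) by apply: outcome_ray; rewrite gtr0_norm.
have a_lt : vlne a (ray (vunit j) l).
  split=> [k|]; first by rewrite /ray /vadd /vscale lerDl mulr_ge0 ?ler0n // ltW.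
  by exists j; rewrite /ray /vadd /vscale /vunit eqxx mulr1 ltrDl.
have a_eq : ray (vunit j) l i = a i.
  by rewrite /ray /vadd /vscale /vunit (negbTE ij) mulr0 addr0.
apply: lt_le_trans (diffq_le_dderiv i l_gt0 out_l).
by rewrite /diffq divr_gt0 // subr_gt0 (u_ext out_l outcome_a a_lt a_eq).
Qed.

Lemma pareto_iff_no_improving_dir : (0 < n)%N ->
  pareto_efficient u a <-> ~ exists w, forall i, 0 < dderiv w i.
Proof.
move=> n_gt0; split => [pareto [w dw_gt0] | no_dir [a' [out' [gain_ge [j gain_gt]]]]].
  apply: pareto; near (0 : R)^'+ => l.
  have l_gt0 : 0 < l by near: l; exact: nbhs_right_gt.
  have diffq_gt0 : forall i, 0 < diffq w i l.
    by near: l; apply: filter_forall => i; exact: cvgr_gt (@diffq_cvg w i) _ (dw_gt0 i).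
  have gain i : u a i < u (ray w l) i.
    by have := diffq_gt0 i; rewrite /diffq pmulr_lgt0 ?invr_gt0 // subr_gt0.
  exists (ray w l); split; first by near: l; exact: near_outcome_ray.
  by split => [i|]; [exact: ltW | exists (Ordinal n_gt0)].
apply/no_dir/(pos_dir_of_nonneg_dir dderiv_scale dderiv_superadd dderiv_vunit_offdiag).
  by move=> i; apply: le_trans (dderiv_ge_gain out' i); rewrite subr_ge0 gain_ge.
by apply: lt_le_trans (dderiv_ge_gain out' j); rewrite subr_gt0.
Unshelve. all: by end_near. Qed.
End DirectionalDerivative.

Theorem lemma4 (R : realType) (n : nat) (u : vec R n -> vec R n) (a : vec R n) :
  public_goods_utility u ->
  vlt (vcst 0) a -> vlt a (vcst 1) ->
  (pareto_efficient u a <->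
   exists (vup vdown dup ddown : vec R n),
     [/\ vlt (vcst 0) vup, vlt vdown (vcst 0),
         dir_deriv u a vup dup /\ vle dup (vcst 0) &
         dir_deriv u a vdown ddown /\ vle ddown (vcst 0)]).
Proof.
move=> [_ _ u_concave u_ext] a_gt0 a_lt1.
have [n0|n_gt0] := posnP n.
  have no_index (i : 'I_n) : False by case: i; rewrite n0.
  split=> _; last by move=> [a' [_ [_ [j _]]]]; case: (no_index j).
  exists (vcst 1), (vcst (-1)), (vcst 0), (vcst 0).
  by split; try split; move=> i; case: (no_index i).
have dd_hom := dderiv_scale u_concave a_gt0 a_lt1.
have dd_superadd := dderiv_superadd u_concave a_gt0 a_lt1.
have dd_offdiag := dderiv_vunit_offdiag u_concave a_gt0 a_lt1 u_ext.
rewrite (pareto_iff_no_improving_dir u_concave a_gt0 a_lt1 u_ext n_gt0).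
rewrite (homogeneous_alternative dd_hom dd_superadd dd_offdiag n_gt0).
split=> [[[v [v_gt0 dv_le]] [p [p_lt0 dp_le]]] |
         [vup [vdown [dup [ddown [vup_gt0 vdown_lt0 [vup_dd dup_le] [vdown_dd ddown_le]]]]]]].
  exists v, p, (dderiv u a v), (dderiv u a p); split => //; split => //;
  exact: dderiv_dir_deriv u_concave a_gt0 a_lt1 _.
split; [exists vup | exists vdown]; split => //.
  by rewrite -(dir_deriv_unique vup_dd).
by rewrite -(dir_deriv_unique vdown_dd).
Qed.
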